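(* Let $X\sim\mathcal N(0,\Sigma)$ be an $n$-dimensional Gaussian random vector and $\rho(x)=\max\{0,x\}$ acting entrywise. Then $\mathbb E\|\rho(X)\|_2\ge\sqrt{\operatorname{tr}(\Sigma)/(2\pi)}$. *)

From HB Require Import structures.
From mathcomp Require Import all_boot all_order all_algebra.
From mathcomp Require Import all_classical all_reals all_analysis.
Set Implicit Arguments. Unset Strict Implicit. Unset Printing Implicit Defensive.
Import Order.TTheory GRing.Theory Num.Theory.
Local Open Scope ring_scope.
Local Open Scope classical_set_scope.

(* Centered one-dimensional Gaussian law with variance v >= 0:
   N(0,v) = normal_prob 0 (sqrt v) if v > 0, and the Dirac mass at 0 if v = 0
   (the library's normal_prob with s = 0 is NOT the degenerate Gaussian). *)
Definition gauss1 {R : realType} (v : R) : set R -> \bar R :=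
  if v == 0 then @dirac _ R (0 : R) R else normal_prob 0 (Num.sqrt v).

Definition is_gaussian_vector {d} {T : measurableType d} {R : realType} {n : nat}
    (P : probability T R) (X : T -> 'cV[R]_n) (Sigma : 'M[R]_n) : Prop :=
  (forall i : 'I_n, measurable_fun setT (fun t => X t i ord0)) /\
  forall (u : 'cV[R]_n) (B : set R), measurable B ->
    P ((fun t => (u^T *m X t) ord0 ord0) @^-1` B) = gauss1 ((u^T *m Sigma *m u) ord0 ord0) B.

Definition relu {R : realType} (x : R) : R := Num.max 0 x.
Definition norm2 {R : realType} {n : nat} (x : 'cV[R]_n) : R :=
  Num.sqrt (\sum_(i < n) (x i ord0) ^+ 2).
Definition relu_vec {R : realType} {n : nat} (x : 'cV[R]_n) : 'cV[R]_n :=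
  map_mx relu x.

(* Each coordinate X_i is a centred Gaussian of variance Sigma_ii, so
   E relu(X_i) = sqrt(Sigma_ii) / sqrt(2 pi).  By Cauchy-Schwarz with the
   weights w_i = sqrt(Sigma_ii), pointwise
     sum_i w_i relu(X_i) <= sqrt(tr Sigma) * ||relu(X)||_2,
   and taking expectations gives tr Sigma / sqrt(2 pi) <= sqrt(tr Sigma) * E||relu(X)||_2. *)

From HB Require Import structures.
From mathcomp Require Import all_boot all_order all_algebra.
From mathcomp Require Import all_classical all_reals all_analysis.
From mathcomp Require Import measurable_realfun normal_distribution ring lra.
Set Implicit Arguments.
Unset Strict Implicit.
Unset Printing Implicit Defensive.

Import Order.TTheory GRing.Theory Num.Theory.
Import numFieldTopology.Exports numFieldNormedType.Exports.
Local Open Scope ring_scope.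
Local Open Scope classical_set_scope.

Lemma sqr_sum_mul_le (R : realDomainType) n (a b : 'I_n -> R) :
  (\sum_i a i * b i) ^+ 2 <= (\sum_i a i ^+ 2) * (\sum_i b i ^+ 2).
Proof.
pose S (F : 'I_n -> 'I_n -> R) := \sum_i \sum_j F i j.
have prodE : (\sum_i a i ^+ 2) * (\sum_i b i ^+ 2) = S (fun i j => a i ^+ 2 * b j ^+ 2).
  by rewrite mulr_suml; apply: eq_bigr => i _; rewrite mulr_sumr.
have sqrE : (\sum_i a i * b i) ^+ 2 = S (fun i j => (a i * b i) * (a j * b j)).
  by rewrite expr2 mulr_suml; apply: eq_bigr => i _; rewrite mulr_sumr.
have swapE : S (fun i j => a j ^+ 2 * b i ^+ 2) = S (fun i j => a i ^+ 2 * b j ^+ 2).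
  by rewrite /S exchange_big.
have lagrange : S (fun i j => (a i * b j - a j * b i) ^+ 2) =
    S (fun i j => a i ^+ 2 * b j ^+ 2) + S (fun i j => a j ^+ 2 * b i ^+ 2)
    - S (fun i j => (a i * b i) * (a j * b j)) *+ 2.
  rewrite /S -sumrMnl -big_split -sumrB; apply: eq_bigr => i _.
  rewrite -sumrMnl -big_split -sumrB; apply: eq_bigr => j _ /=; ring.
have : 0 <= S (fun i j => (a i * b j - a j * b i) ^+ 2).
  by apply: sumr_ge0 => i _; apply: sumr_ge0 => j _; exact: sqr_ge0.
rewrite lagrange swapE -prodE -sqrE; lra.
Qed.

Lemma quad_delta_mx (R : pzRingType) m n (A : 'M[R]_(m, n)) i j :
  ((delta_mx i (ord0 : 'I_1))^T *m A *m delta_mx j (ord0 : 'I_1)) ord0 ord0 = A i j.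
Proof. by rewrite trmx_delta -rowE -colE !mxE. Qed.

Lemma lin_delta_mx (R : pzRingType) n (x : 'cV[R]_n) i :
  ((delta_mx i (ord0 : 'I_1))^T *m x) ord0 ord0 = x i ord0.
Proof. by rewrite trmx_delta -rowE !mxE. Qed.

Section integral_density.
Local Open Scope ereal_scope.
Context d (T : measurableType d) (R : realType) (mu nu : {measure set T -> \bar R}).
Variable g : T -> R.
Hypothesis mg : measurable_fun setT g.
Hypothesis g_ge0 : forall x, (0 <= g x)%R.
Hypothesis nuE : forall A, measurable A -> nu A = \int[mu]_(x in A) (g x)%:E.

Let integral_indic_density E : measurable E ->
  \int[nu]_x (\1_E x)%:E = \int[mu]_x ((\1_E x)%:E * (g x)%:E).
Proof.
move=> mE; rewrite integral_indic// setIT nuE// integral_mkcond.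
apply: eq_integral => x _; rewrite patchE indicE.
by case: ifPn => xE /=; rewrite ?mul1e ?mul0e.
Qed.

Import HBNNSimple.

Let integral_nnsfun_density (f : {nnsfun T >-> R}) :
  \int[nu]_x (f x)%:E = \int[mu]_x ((f x)%:E * (g x)%:E).
Proof.
under [LHS]eq_integral do rewrite fimfunE -fsumEFin//.
rewrite [LHS]ge0_integral_fsum//; last 2 first.
  - by move=> r; exact/measurable_EFinP/measurableT_comp.
  - by move=> n x _; rewrite EFinM nnfun_muleindic_ge0.
under [RHS]eq_integral.
  move=> x xD; rewrite fimfunE -fsumEFin// ge0_mule_fsuml; last first.
    by move=> r; rewrite EFinM nnfun_muleindic_ge0.
  over.
rewrite [RHS]ge0_integral_fsum//; last 2 first.
  - move=> r; apply/measurable_EFinP => /=.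
    by apply: measurable_funM => //; exact: measurableT_comp.
  - move=> n x _; rewrite mule_ge0//; last by rewrite lee_fin.
    by rewrite EFinM nnfun_muleindic_ge0.
apply: eq_fsbigr => r /[!inE] -[t _ <-].
rewrite integralZl_indic_nnsfun//= integral_indic_density// -ge0_integralZl//.
- by apply: eq_integral => x _; rewrite EFinM muleA.
- apply: emeasurable_funM; first exact/measurable_EFinP/measurable_indic.
  exact/measurable_EFinP.
- by move=> x _; rewrite mule_ge0// lee_fin.
- by rewrite lee_fin.
Qed.

Lemma ge0_integral_density (f : T -> \bar R) :
  measurable_fun setT f -> (forall x, 0 <= f x) ->
  \int[nu]_x f x = \int[mu]_x (f x * (g x)%:E).
Proof.
move=> mf f_ge0; pose f_ := nnsfun_approx measurableT mf.
have f_nd x : {homo f_^~ x : m n / (m <= n)%N >-> (m <= n)%R}.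
  by move=> m n mn; exact/lefP/nd_nnsfun_approx.
have mf_ n : measurable_fun setT (f_ n) by exact: measurable_funTS.
transitivity (limn (fun n => \int[nu]_x (f_ n x)%:E)).
  rewrite -monotone_convergence//=.
  - apply: eq_integral => x _; apply/esym/cvg_lim => //=.
    exact: cvg_nnsfun_approx.
  - by move=> n; exact/measurable_EFinP.
  - by move=> n ? _; rewrite lee_fin.
  - by move=> x _ m n mn; rewrite lee_fin f_nd.
transitivity (limn (fun n => \int[mu]_x ((f_ n x)%:E * (g x)%:E))).
  by congr (limn _); apply/funext => n; exact: integral_nnsfun_density.
rewrite -monotone_convergence//=.
- apply: eq_integral => x _; apply/cvg_lim => //=.
  rewrite (muleC (f x)); under eq_fun do rewrite muleC.
  by apply: cvgeZl => //; exact: cvg_nnsfun_approx.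
- by move=> n; apply/measurable_EFinP/measurable_funM.
- by move=> n x _; rewrite mule_ge0// lee_fin.
- by move=> x _ m n mn; rewrite lee_wpmul2r ?lee_fin ?f_nd.
Qed.

End integral_density.

Lemma relu_ge0 (R : realType) (x : R) : 0 <= relu x.
Proof. by rewrite /relu le_max lexx. Qed.

Lemma measurable_relu (R : realType) : measurable_fun setT (@relu R).
Proof. by apply: measurable_maxr. Qed.

Section relu_normal_moment.
Context (R : realType) (s : R).
Hypothesis s_gt0 : 0 < s.

Let k := s ^+ 2 *+ 2.

Let gauss_k (x : R) := expR (- (x ^+ 2) / k).

Let is_derive_gauss_k (x : R) : is_derive x 1 gauss_k (gauss_k x * (- (x *+ 2) / k)).
Proof.
have dsqr : is_derive x 1 (fun y : R => - (y ^+ 2) / k) (- (x *+ 2) / k).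
  have dX := @is_deriveX R R id 2 x 1 1 (is_derive_id x 1).
  have := @is_deriveM R _ _ (cst k^-1) x 1 _ _ (is_deriveN dX) (is_derive_cst _ _ _).
  have -> : (fun y : R => - (y ^+ 2) / k) = (- id ^+ 2) * cst k^-1 by apply/funext.
  rewrite scaler0 add0r expr1; congr is_derive.
  by rewrite -[LHS]/(k^-1 * - ((2 * x) * 1)) mulr1 mulrC mulr_natl.
exact: (is_derive1_comp (is_derive_expR _) dsqr : is_derive x 1 (expR \o _) _).
Qed.

Let continuous_mul_gauss_k : continuous (fun x : R => x * gauss_k x).
Proof.
move=> x; apply: cvgM; first exact: cvg_id.
apply/differentiable_continuous/derivable1_diffP.
by have dg := is_derive_gauss_k x; exact: ex_derive.
Qed.

Let integral0y_mul_gauss_k :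
  (\int[lebesgue_measure]_(x in `[0%R, +oo[) (x * gauss_k x)%:E = (s ^+ 2)%:E)%E.
Proof.
pose F (x : R) : R := - s ^+ 2 * gauss_k x.
have s_neq0 : s != 0 by rewrite gt_eqF.
have dF (x : R) : is_derive x 1 F (x * gauss_k x).
  move: (is_deriveZ (- s ^+ 2) (is_derive_gauss_k x)) => /is_derive_eq; apply.
  by rewrite -[LHS]/(- s ^+ 2 * (gauss_k x * (- (x *+ 2) / k))) /k; field.
have cF : continuous F.
  by move=> x; exact/differentiable_continuous/derivable1_diffP/ex_derive.
have k_gt0 : 0 < k by rewrite pmulrn_rgt0 // exprn_gt0.
have gauss_ky : gauss_k x @[x --> +oo] --> 0.
  have sqr_k : x ^+ 2 / k @[x --> +oo] --> +oo.
    by apply: gt0_cvgMly; [rewrite invr_gt0|exact: cvgr_expr2].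
  have -> : gauss_k = (fun y => expR (- y)) \o (fun x => x ^+ 2 / k).
    by apply/funext => x; rewrite /gauss_k /= mulNr.
  by apply: (cvg_comp (fun x : R => x ^+ 2 / k) (fun y => expR (- y))); [exact: sqr_k|exact: cvgr_expR].
have Fy : F x @[x --> +oo] --> 0.
  by rewrite -(mulr0 (- s ^+ 2)); exact: cvgM (cvg_cst _) gauss_ky.
rewrite (@ge0_continuous_FTC2y R _ F 0 0).
- by rewrite -EFinB /F /gauss_k expr0n /= oppr0 mul0r expR0 mulr1 sub0r opprK.
- by move=> x x0; rewrite mulr_ge0 // expR_ge0.
- exact: continuous_subspaceT continuous_mul_gauss_k.
- exact: Fy.
- by move=> x _; exact: ex_derive.
- exact/cvg_at_right_filter/cF.
- by move=> x _; rewrite derive1E; exact: derive_val.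
Qed.

Lemma integral_relu_normal_pdf :
  (\int[lebesgue_measure]_x ((relu x)%:E * (normal_pdf 0 s x)%:E) =
   (s / Num.sqrt (pi *+ 2))%:E)%E.
Proof.
have s_neq0 : s != 0 by rewrite gt_eqF.
transitivity (\int[lebesgue_measure]_(x in `[0%R, +oo[) (normal_peak s * (x * gauss_k x))%:E)%E.
  rewrite [RHS]integral_mkcond; apply: eq_integral => x _; rewrite patchE.
  case: ifPn => [|x_notin]; last first.
    have x_lt0 : x < 0.
      by move: x_notin; rewrite notin_setE /= in_itv /= andbT => /negP; rewrite -ltNge.
    by rewrite /relu (max_idPl (ltW x_lt0)) mul0e.
  rewrite inE /= in_itv /= andbT => x_ge0.
  rewrite /relu (max_idPr x_ge0) /normal_pdf (negbTE s_neq0) /normal_fun subr0.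
  by rewrite -EFinM /gauss_k /k; congr EFin; ring.
under eq_integral do rewrite EFinM.
rewrite ge0_integralZl//; last 3 first.
- apply/measurable_EFinP/measurable_funTS.
  exact: continuous_measurable_fun continuous_mul_gauss_k.
- by move=> x; rewrite /= in_itv /= andbT lee_fin => x_ge0; rewrite mulr_ge0 // expR_ge0.
- by rewrite lee_fin normal_peak_ge0.
rewrite integral0y_mul_gauss_k -EFinM; congr EFin.
have c_gt0 : 0 < Num.sqrt (pi *+ 2 : R) by rewrite sqrtr_gt0 pmulrn_rgt0 // pi_gt0.
rewrite /normal_peak -mulrnAr sqrtrM ?sqr_ge0 // sqrtr_sqr ger0_norm ?ltW //.
by field; rewrite s_neq0 gt_eqF.
Qed.

End relu_normal_moment.

Lemma relu_moment_gauss1 d (T : measurableType d) (R : realType) (P : probability T R)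
    (Y : T -> R) (v : R) :
  measurable_fun setT Y -> 0 <= v ->
  (forall B, measurable B -> P (Y @^-1` B) = gauss1 v B) ->
  (\int[P]_t (relu (Y t))%:E = (Num.sqrt v / Num.sqrt (pi *+ 2))%:E)%E.
Proof.
move=> mY v_ge0 lawY.
have mrelu : measurable_fun setT (fun y : R => (relu y)%:E).
  by apply/measurable_EFinP; exact: measurable_relu.
have pushE := @ge0_integral_pushforward _ _ _ (measurableTypeR R) _ Y mY P setT
  (fun y => (relu y)%:E) measurableT mrelu.
rewrite preimage_setT in pushE.
rewrite -pushE; last by move=> y _; rewrite lee_fin relu_ge0.
have [v0|v_neq0] := eqVneq v 0.
  transitivity (\int[@dirac _ (measurableTypeR R) 0%R R]_y (relu y)%:E)%E.
    by apply: eq_measure_integral => A mA _; rewrite [LHS]lawY // /gauss1 v0 eqxx.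
  by rewrite integral_dirac // diracT mul1e /relu maxxx v0 sqrtr0 mul0r.
have s_gt0 : 0 < Num.sqrt v by rewrite sqrtr_gt0 lt_def v_neq0 v_ge0.
transitivity (\int[normal_prob 0%R (Num.sqrt v)]_y (relu y)%:E)%E.
  by apply: eq_measure_integral => A mA _; rewrite [LHS]lawY // /gauss1 (negbTE v_neq0).
rewrite -(integral_relu_normal_pdf s_gt0).
apply: ge0_integral_density => //.
- exact: measurable_normal_pdf.
- by move=> x; exact: normal_pdf_ge0.
- by move=> y; rewrite lee_fin relu_ge0.
Qed.

Lemma gaussian_vector_coord d (T : measurableType d) (R : realType)
    (P : probability T R) n (X : T -> 'cV[R]_n) (Sigma : 'M[R]_n) i B :
  is_gaussian_vector P X Sigma -> measurable B ->
  P ((fun t => X t i ord0) @^-1` B) = gauss1 (Sigma i i) B.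
Proof.
move=> [_ lawX] mB; rewrite -(quad_delta_mx Sigma) -lawX //.
by congr (P _); apply/funext => t /=; rewrite lin_delta_mx.
Qed.

Lemma weighted_relu_sum_le (R : realType) n (w : 'I_n -> R) (x : 'cV[R]_n) :
  \sum_i w i * relu (x i ord0) <= Num.sqrt (\sum_i w i ^+ 2) * norm2 (relu_vec x).
Proof.
rewrite /norm2 -sqrtrM; last by apply: sumr_ge0 => i _; exact: sqr_ge0.
under [X in _ <= Num.sqrt (_ * X)]eq_bigr do rewrite mxE.
rewrite (le_trans (ler_norm _)) // -sqrtr_sqr ler_wsqrtr //.
exact: sqr_sum_mul_le.
Qed.

Section weighted_relu_expectation.
Local Open Scope ereal_scope.
Context d (T : measurableType d) (R : realType) (mu : {measure set T -> \bar R}).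
Context n (X : T -> 'cV[R]_n).
Hypothesis mX : forall i, measurable_fun setT (fun t => X t i ord0).

Let mrelu i : measurable_fun setT (fun t => relu (X t i ord0)).
Proof. exact: (measurableT_comp (@measurable_relu R) (mX i)). Qed.

Lemma measurable_norm2_relu_vec : measurable_fun setT (fun t => norm2 (relu_vec (X t))).
Proof.
apply: (measurableT_comp (continuous_measurable_fun (@sqrt_continuous R))).
apply: measurable_sum => i /=.
under eq_fun do rewrite mxE.
exact: measurable_funM (mrelu i) (mrelu i).
Qed.

Lemma weighted_relu_expectation_le (w : 'I_n -> R) : (forall i, 0 <= w i)%R ->
  \sum_i (w i)%:E * \int[mu]_t (relu (X t i ord0))%:E <=
  (Num.sqrt (\sum_i w i ^+ 2))%:E * \int[mu]_t (norm2 (relu_vec (X t)))%:E.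
Proof.
move=> w_ge0.
have wrelu_ge0 i t : (0 <= w i * relu (X t i ord0))%R by rewrite mulr_ge0 ?relu_ge0.
have mwrelu i : measurable_fun setT (fun t => w i * relu (X t i ord0))%R.
  exact: measurable_funM.
have mnorm := measurable_norm2_relu_vec.
have -> : \sum_i (w i)%:E * \int[mu]_t (relu (X t i ord0))%:E =
    \int[mu]_t \sum_i (w i * relu (X t i ord0))%:E.
  rewrite ge0_integral_sum //; last 2 first.
  - by move=> i; exact/measurable_EFinP.
  - by move=> i t _; rewrite lee_fin.
  apply: eq_bigr => i _; rewrite -ge0_integralZl //.
  - exact/measurable_EFinP/mrelu.
  - by move=> t _; rewrite lee_fin relu_ge0.
  - by rewrite lee_fin.
rewrite -ge0_integralZl //; last 2 first.
- exact/measurable_EFinP.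
- by move=> t _; rewrite lee_fin sqrtr_ge0.
apply: ge0_le_integral => //.
- by move=> t _; rewrite sume_ge0 // => i _; rewrite lee_fin.
- by under eq_fun do rewrite sumEFin; exact/measurable_EFinP/measurable_sum.
- exact/measurable_EFinP/measurable_funM.
- by move=> t _; rewrite sumEFin -EFinM lee_fin weighted_relu_sum_le.
Qed.

End weighted_relu_expectation.

Theorem mainTheorem15 (d : measure_display) (T : measurableType d) (R : realType)
    (P : probability T R) (n : nat) (Sigma : 'M[R]_n) (X : T -> 'cV[R]_n) :
  Sigma^T = Sigma ->
  (forall u : 'cV[R]_n, 0 <= (u^T *m Sigma *m u) ord0 ord0) ->
  is_gaussian_vector P X Sigma ->
  ((Num.sqrt (\tr Sigma / (pi *+ 2)))%:E
     <= \int[P]_t (norm2 (relu_vec (X t)))%:E)%E.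
Proof.
move=> _ Sigma_psd gaussX.
have var_ge0 i : 0 <= Sigma i i by rewrite -quad_delta_mx.
have moment i : (\int[P]_t (relu (X t i ord0))%:E =
    (Num.sqrt (Sigma i i) / Num.sqrt (pi *+ 2))%:E)%E.
  by apply: relu_moment_gauss1 => // [|B mB]; [exact: gaussX.1|exact: gaussian_vector_coord].
have tr_ge0 : 0 <= \tr Sigma by apply: sumr_ge0.
have weightsE : \sum_i Num.sqrt (Sigma i i) ^+ 2 = \tr Sigma.
  by apply: eq_bigr => i _; rewrite sqr_sqrtr.
have momentsE : (\sum_i (Num.sqrt (Sigma i i))%:E * \int[P]_t (relu (X t i ord0))%:E =
    (\tr Sigma / Num.sqrt (pi *+ 2))%:E)%E.
  under eq_bigr do rewrite moment -EFinM mulrA -expr2 sqr_sqrtr //.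
  by rewrite sumEFin -mulr_suml.
have := weighted_relu_expectation_le P gaussX.1 (fun i => sqrtr_ge0 (Sigma i i)).
rewrite momentsE weightsE sqrtrM ?sqrtrV ?pmulrn_rge0 ?pi_gt0 //.
have [->|tr_neq0] := eqVneq (\tr Sigma) 0.
  by rewrite sqrtr0 mul0r => _; apply: integral_ge0 => t _; rewrite lee_fin sqrtr_ge0.
have sqrt_tr_gt0 : 0 < Num.sqrt (\tr Sigma) by rewrite sqrtr_gt0 lt_def tr_neq0.
by rewrite -[X in X / _](sqr_sqrtr tr_ge0) -mulrA EFinM lee_pmul2l ?lte_fin.
Qed.
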